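(* Either let all graphs below be undirected, or let all be directed. Let $D_0$ be a graph on $k$ vertices $v_1,\dots,v_k$ and let $D_1,\dots,D_k$ be graphs; let $f_i=f(D_i)$ and $n_i=n(D_i)$ for $0\le i\le k$, and for each $0\leq i\leq k$ let $R_i$ be a nonempty bad set of $D_i$. Let $D$ be obtained from the disjoint union of $D_1,\dots,D_k$ by adding, for every arc (resp. edge) $v_iv_j$ of $D_0$, all arcs from every vertex of $R_i\subseteq V(D_i)$ to every vertex of $R_j\subseteq V(D_j)$ (resp. all edges between $R_i$ and $R_j$). Then: \begin{enumerate} \item $n(D)=n_1+\dots+n_k$ and $f(D)\geq f_0+f_1+\dots+f_k$; \item if $R_i$ is an inclusion-wise minimal bad set of $D_i$ for every $1\leq i\leq k$, then $f(D)=\sum_{0\le i\le k} f_i$ and $R=\bigcup_{v_i\in R_0}R_i$ is a bad set of $D$; \item if moreover $R_1,\dots,R_k$ are cliques of size at most $c$, the underlying graphs of $D_1,\dots,D_k$ are chordal and have treewidth at most $t$, and $D_0$ has treewidth at most $t_0$, then $D$ has treewidth at most $\max\bigl(t,\,c(t_0+1)-1\bigr)$. \end{enumerate}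
   Context: Undirected graphs are finite and simple; directed graphs are oriented graphs (no loops, no multiple arcs, no antiparallel arcs). $n(H)$ is the number of vertices of $H$; $f(H)$ is the minimum size of a feedback vertex set, i.e. of a set $F\subseteq V(H)$ such that $H-F$ has no (directed, in the directed case) cycle. A set $R\subseteq V(H)$ is bad if it is not contained in any minimum feedback vertex set of $H$. A graph is chordal if it has a vertex ordering in which, for every vertex, its neighbours preceding it form a clique. A $k$-tree is a graph with a vertex ordering $\phi$ in which, for every vertex $v$, the preceding neighbours form a clique of size exactly $\min(k,\phi(v)-1)$; a graph has treewidth at most $k$ if it is a subgraph of a $k$-tree. Treewidth and cliques of a directed graph refer to its underlying undirected graph. *)

From mathcomp Require Import all_boot.
From mathcomp Require Import boolp.
Set Implicit Arguments. Unset Strict Implicit. Unset Printing Implicit Defensive.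

Definition is_graph (dir : bool) (T : finType) (e : rel T) : Prop :=
  irreflexive e /\
  (if dir then forall x y, e x y -> ~~ e y x else symmetric e).

Definition min_cycle_len (dir : bool) : nat := if dir then 2 else 3.

Definition is_cycle (dir : bool) (T : finType) (e : rel T) (s : seq T) : Prop :=
  [/\ uniq s, min_cycle_len dir <= size s & cycle e s].

Definition fvs (dir : bool) (T : finType) (e : rel T) (F : {set T}) : Prop :=
  forall s, is_cycle dir e s -> has (mem F) s.

Lemma fvs_setT (dir : bool) (T : finType) (e : rel T) : fvs dir e setT.
Proof.
move=> [|x s] [_ Hs _]; first by case: dir Hs.
by rewrite /= in_setT.
Qed.

Lemma fvn_ex (dir : bool) (T : finType) (e : rel T) :
  exists n, (fun k => `[< exists F : {set T}, fvs dir e F /\ #|F| = k >]) n.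
Proof. by exists #|[set: T]|; apply/asboolP; exists setT; split=> //; apply: fvs_setT. Qed.

Definition fvn (dir : bool) (T : finType) (e : rel T) : nat := ex_minn (fvn_ex dir e).

Definition min_fvs (dir : bool) (T : finType) (e : rel T) (F : {set T}) : Prop :=
  fvs dir e F /\ #|F| = fvn dir e.

Definition bad (dir : bool) (T : finType) (e : rel T) (R : {set T}) : Prop :=
  forall F, min_fvs dir e F -> ~ (R \subset F).

Definition minimal_bad (dir : bool) (T : finType) (e : rel T) (R : {set T}) : Prop :=
  bad dir e R /\ forall R' : {set T}, R' \proper R -> ~ bad dir e R'.

Definition ug (T : finType) (e : rel T) : rel T := fun x y => e x y || e y x.

Definition is_clique (T : finType) (e : rel T) (A : {set T}) : Prop :=
  forall x y, x \in A -> y \in A -> x != y -> e x y.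

Definition chordal (T : finType) (e : rel T) : Prop :=
  exists phi : T -> 'I_#|T|, injective phi /\
    forall v, is_clique e [set u | e u v & phi u < phi v].

(* k-tree: undirected graph with an ordering phi (0-based position phi v, so
   phi v = phi(v) - 1 in 1-based terms) in which the preceding neighbours of
   each vertex form a clique of size exactly min(k, phi v). *)
Definition ktree (k : nat) (S : finType) (h : rel S) : Prop :=
  is_graph false h /\
  exists phi : S -> 'I_#|S|, injective phi /\
    forall v, is_clique h [set u | h u v & phi u < phi v] /\
              #|[set u | h u v & phi u < phi v]| = minn k (phi v).

Definition tw_le (T : finType) (e : rel T) (k : nat) : Prop :=
  exists (S : finType) (h : rel S) (g : T -> S),
    [/\ ktree k h, injective g & forall x y, ug e x y -> h (g x) (g y)].

Definition compose (k : nat) (e0 : rel 'I_k) (T : 'I_k -> finType)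
  (e : forall i, rel (T i)) (R : forall i, {set T i}) : rel {i : 'I_k & T i} :=
  fun x y =>
    if tag x == tag y then e (tag x) (tagged x) (tagged_as x y)
    else [&& e0 (tag x) (tag y), tagged x \in R (tag x) & tagged y \in R (tag y)].

Definition compose_set (k : nat) (T : 'I_k -> finType) (R0 : {set 'I_k})
  (R : forall i, {set T i}) : {set {i : 'I_k & T i}} :=
  [set x | (tag x \in R0) && (tagged x \in R (tag x))].

(* Lower bound: a feedback vertex set F of D meets each D_i in a feedback vertex set
   of D_i, and the blocks i with R_i inside F form a feedback vertex set of D_0, since a
   cycle of D_0 through blocks having a vertex of R_i outside F lifts to a cycle of D
   through such vertices; as R_i is bad, each of these blocks costs at least f_i + 1.
   Upper bound, for minimal bad sets R_i: pick r_i in R_i and a minimum feedback vertex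
   set M_i of D_i containing R_i minus r_i (it misses r_i). The M_i, together with the r_i
   of the blocks in a minimum feedback vertex set of D_0, meet every cycle of D: a cycle
   can leave or enter block i only through r_i, so it either stays in one block or runs
   through the r_i only, along a cycle of D_0. Once f(D) = f_0 + ... + f_k, the lower
   bound argument shows that a minimum feedback vertex set of D containing R would
   yield one of D_0 containing R_0.
   Treewidth: a graph lies in a K-tree as soon as its vertices can be ordered so that
   the earlier neighbours of each vertex form a clique of size at most K. Take first the
   vertices of the R_i, block by block along such an ordering of a t0-tree containing D_0,
   then the other vertices of each block along an ordering of the chordal graph D_i that
   starts with the clique R_i. The earlier neighbours of a vertex of R_i lie in at most
   t0 + 1 sets R_j, those of any other vertex in its own block. *)

From mathcomp Require Import all_boot boolp zify.
Set Implicit Arguments. Unset Strict Implicit. Unset Printing Implicit Defensive.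

(** * Feedback vertex sets of the composition *)

Lemma fvn_le_card dir (T : finType) (e : rel T) (F : {set T}) :
  fvs dir e F -> fvn dir e <= #|F|.
Proof. by move=> eF; rewrite /fvn; case: ex_minnP => m _; apply; apply/asboolP; exists F. Qed.

Lemma min_fvs_exists dir (T : finType) (e : rel T) : exists F, min_fvs dir e F.
Proof. by rewrite /min_fvs /fvn; case: ex_minnP => m /asboolP [F eF _]; exists F. Qed.

Lemma is_cycle_map_in dir (S U : finType) (e1 : rel S) (e2 : rel U) (f : S -> U) (s : seq S) :
  {in s &, injective f} -> {in s &, {homo f : x y / e1 x y >-> e2 x y}} ->
  is_cycle dir e1 s -> is_cycle dir e2 (map f s).
Proof.
move=> f_inj f_homo [s_uniq s_size s_cycle]; split; rewrite ?size_map //.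
  by rewrite map_inj_in_uniq.
exact: homo_cycle_in f_homo (allss s) s_cycle.
Qed.

Lemma fvs_map_in dir (S U : finType) (e1 : rel S) (e2 : rel U) (f : S -> U) (F : {set U}) s :
  fvs dir e2 F -> {in s &, injective f} -> {in s &, {homo f : x y / e1 x y >-> e2 x y}} ->
  is_cycle dir e1 s -> exists2 x, x \in s & f x \in F.
Proof.
by move=> e2F f_inj f_homo /(is_cycle_map_in f_inj f_homo) /e2F /hasP [_ /mapP [x xs ->]]; exists x.
Qed.

Lemma minimal_bad_split dir (T : finType) (e : rel T) (R : {set T}) (a : T) :
  minimal_bad dir e R -> a \in R -> exists M, [/\ min_fvs dir e M, R :\ a \subset M & a \notin M].
Proof.
move=> [R_bad R_min] aR.
have [[M [eM RaM]] | no_M] := pselect (exists M, min_fvs dir e M /\ R :\ a \subset M).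
  exists M; split=> //; apply: contra_notN (R_bad M eM) => aM.
  by apply/subsetP => b bR; have [-> // | ba] := eqVneq b a; rewrite (subsetP RaM) // !inE ba.
by case: (R_min _ (properD1 aR)) => M eM RaM; case: no_M; exists M.
Qed.

Definition fiber (I : finType) (T : I -> finType) (F : {set {i : I & T i}}) (i : I) : {set T i} :=
  [set a | Tagged T a \in F].

Lemma card_fibers (I : finType) (T : I -> finType) (F : {set {i : I & T i}}) :
  #|F| = \sum_i #|fiber F i|.
Proof.
rewrite -sum1_card (partition_big (fun x => tag x) predT) //=; apply: eq_bigr => i _.
rewrite /fiber -(card_imset _ (@eq_from_Tagged _ T i)) -sum1_card; apply: eq_bigl => -[j a] /=.
apply/andP/imsetP => [[aF /eqP ji] | [b]]; first by subst j; exists a; rewrite ?inE.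
rewrite inE => bF ba; have /= ij := congr1 tag ba; subst j.
by rewrite ba bF.
Qed.

Lemma Tagged_tagged_as (I : eqType) (T_ : I -> Type) (u x : {i : I & T_ i}) :
  tag x = tag u -> Tagged T_ (tagged_as u x) = x.
Proof. by case: u => i a; case: x => j b /= ji; subst j; rewrite tagged_asE. Qed.

Section Composition.
Variables (dir : bool) (k : nat) (e0 : rel 'I_k) (T : 'I_k -> finType)
  (e : forall i, rel (T i)) (R : forall i, {set T i}).
Arguments e : clear implicits.

Local Notation D := (compose e0 e R).

Lemma compose_tagged i (a b : T i) : D (Tagged T a) (Tagged T b) = e i a b.
Proof. by rewrite /compose /= eqxx tagged_asE. Qed.

Lemma compose_cross x y : tag x != tag y ->
  D x y = [&& e0 (tag x) (tag y), tagged x \in R (tag x) & tagged y \in R (tag y)].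
Proof. by rewrite /compose => /negbTE ->. Qed.

Lemma compose_irrefl : (forall i, irreflexive (e i)) -> irreflexive D.
Proof. by move=> e_irr [i a]; rewrite compose_tagged e_irr. Qed.

Lemma fvs_fiber F i : fvs dir D F -> fvs dir (e i) (fiber F i).
Proof.
move=> DF s cyc; apply/hasP.
have [|a as_ aF] := fvs_map_in DF (in2W (@eq_from_Tagged _ T i)) _ cyc.
  by move=> a b _ _; rewrite compose_tagged.
by exists a; rewrite ?inE.
Qed.

Definition covered (F : {set {i : 'I_k & T i}}) : {set 'I_k} := [set i | R i \subset fiber F i].

Lemma fvs_covered F : irreflexive e0 -> fvs dir D F -> fvs dir e0 (covered F).
Proof.
move=> e0_irr DF s cyc; apply/negPn/negP => /hasPn s_out.
pose uncovered i x := [&& tag x == i, tagged x \in R (tag x) & x \notin F].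
have witness i : i \in s -> exists x, uncovered i x.
  move=> /s_out /=; rewrite inE => /subsetPn [a aR aF].
  by exists (Tagged T a); rewrite /uncovered eqxx aR; rewrite inE in aF.
have [i0 i0s] : exists i0, i0 \in s.
  by case: cyc; case: s {s_out witness} => [|i0 s'] _; [case: dir | exists i0; rewrite mem_head].
have [x0 _] := witness i0 i0s.
pose f i := odflt x0 [pick x | uncovered i x].
have fP i : i \in s -> uncovered i (f i).
  by move/witness => [x ux]; rewrite /f; case: pickP => [//|/(_ x)]; rewrite ux.
have tag_f i : i \in s -> tag (f i) = i by move/fP => /andP [/eqP].
have f_inj : {in s &, injective f}.
  by move=> i j is_ js fij; rewrite -(tag_f i) // -(tag_f j) // fij.
have f_homo : {in s &, {homo f : i j / e0 i j >-> D i j}}.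
  move=> i j is_ js e0ij; have ij : i != j by apply: contraTneq e0ij => ->; rewrite e0_irr.
  have /and3P [_ fiR _] := fP i is_; have /and3P [_ fjR _] := fP j js.
  rewrite compose_cross; last by rewrite !tag_f.
  by apply/and3P; split=> //; rewrite !tag_f.
have [i is_] := fvs_map_in DF f_inj f_homo cyc.
by have /and3P [_ _ /negP] := fP i is_.
Qed.

Lemma card_covered_le F : fvs dir D F -> (forall i, bad dir (e i) (R i)) ->
  \sum_i fvn dir (e i) + #|covered F| <= #|F|.
Proof.
move=> DF e_bad; rewrite card_fibers -sum1_card [\sum_(i in _) 1]big_mkcond -big_split /=.
apply: leq_sum => i _; have fvn_le := fvn_le_card (fvs_fiber (i := i) DF).
case: ifP => [|_]; rewrite ?addn0 // inE addn1 ltn_neqAle fvn_le andbT => RF.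
by apply/eqP => fvnE; apply: (e_bad i (fiber F i)) RF; split; [exact: fvs_fiber|].
Qed.

Lemma fvn_compose_ge : irreflexive e0 -> (forall i, bad dir (e i) (R i)) ->
  fvn dir e0 + \sum_i fvn dir (e i) <= fvn dir D.
Proof.
move=> e0_irr e_bad; have [F [DF <-]] := min_fvs_exists dir D.
rewrite addnC; apply: leq_trans (card_covered_le DF e_bad).
by rewrite leq_add2l; apply/fvn_le_card/fvs_covered.
Qed.

Lemma bad_compose_set R0 : irreflexive e0 -> bad dir e0 R0 -> (forall i, bad dir (e i) (R i)) ->
  fvn dir D = fvn dir e0 + \sum_i fvn dir (e i) -> bad dir D (compose_set R0 R).
Proof.
move=> e0_irr R0_bad e_bad fvnE F [DF cardF] RF.
have covered_min : min_fvs dir e0 (covered F).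
  have e0_covered := fvs_covered e0_irr DF.
  split=> //; apply/eqP; rewrite eqn_leq fvn_le_card // andbT.
  rewrite -(leq_add2l (\sum_i fvn dir (e i))) (leq_trans (card_covered_le DF e_bad)) //.
  by rewrite cardF fvnE addnC.
apply: R0_bad covered_min _; apply/subsetP => i iR0; rewrite inE; apply/subsetP => a aR.
by rewrite inE (subsetP RF) // inE /= iR0.
Qed.

Section LiftedFvs.
Variables (r : forall i, T i) (M : forall i, {set T i}) (F0 : {set 'I_k}).
Hypothesis e_irr : forall i, irreflexive (e i).
Hypothesis M_fvs : forall i, fvs dir (e i) (M i).
Hypothesis R_port : forall i, R i :\ r i \subset M i.
Hypothesis F0_fvs : fvs dir e0 F0.

Definition port i : {i : 'I_k & T i} := Tagged T (r i).

Definition lifted_fvs := [set x | tagged x \in M (tag x)] :|: port @: F0.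

Local Notation L := lifted_fvs.

Lemma port_inj : injective port.
Proof. by move=> i j /(congr1 tag). Qed.

Lemma notin_lifted_port x : tagged x \in R (tag x) -> x \notin L -> x = port (tag x).
Proof.
case: x => i a /=; rewrite !inE negb_or /= => aR /andP [aM _].
have [-> // | ar] := eqVneq a (r i).
by rewrite (subsetP (R_port i)) ?inE ?ar in aM.
Qed.

Lemma cross_edge_ports x y : D x y -> tag x != tag y -> x \notin L -> y \notin L ->
  x = port (tag x) /\ y = port (tag y).
Proof.
by move=> + xy; rewrite compose_cross // => /and3P [_ xR yR] xL yL; split; apply: notin_lifted_port.
Qed.

Lemma path_avoids_block i x p : path D x p -> ~~ has (mem L) (x :: p) ->
  tag x != i -> port i \notin x :: p -> tag (last x p) != i.
Proof.
elim: p x => [//|w p IHp] x /= /andP [Dxw wp] /norP [xL wpL] xi.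
rewrite inE negb_or => /andP [_ port_wp]; apply: IHp => //.
apply: contra port_wp => /eqP wi; move: (wpL); rewrite /= negb_or => /andP [wL _].
have xw : tag x != tag w by rewrite wi.
have [_ wE] := cross_edge_ports Dxw xw xL wL.
by rewrite -wi -wE mem_head.
Qed.

Lemma path_in_block x p : path D x p -> ~~ has (mem L) (x :: p) -> uniq (x :: p) ->
  tag (last x p) = tag x -> all (fun z => tag z == tag x) (x :: p).
Proof.
elim: p x => [|w p IHp] x /=; first by rewrite eqxx.
move=> /andP [Dxw wp] /norP [xL wpL] /andP [x_wp wp_uniq] last_tag.
have [wx | wx] := eqVneq (tag w) (tag x).
  by have := IHp w wp wpL wp_uniq; rewrite wx eqxx => /(_ last_tag) /andP [_ wp_tag].
have [wL _] := norP wpL.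
have xw : tag x != tag w by rewrite eq_sym.
have [xE _] := cross_edge_ports Dxw xw xL wL.
by move: (path_avoids_block wp wpL wx); rewrite -xE last_tag eqxx => /(_ x_wp).
Qed.

Lemma cycle_in_block s y : is_cycle dir D s -> ~~ has (mem L) s -> y \in s ->
  y != port (tag y) -> all (fun z => tag z == tag y) s.
Proof.
move=> [s_uniq _ s_cycle] sL ys y_port.
have := rot_index ys; set p := (X in _ = y :: X) => sE.
have: cycle D (y :: p) by rewrite -sE rot_cycle.
rewrite /= rcons_path => /andP [yp last_edge].
have ypL : ~~ has (mem L) (y :: p) by rewrite -sE has_rot.
have last_tag : tag (last y p) = tag y.
  apply/eqP; apply: contraNT y_port => tag_neq.
  have lastL : last y p \notin L.
    by apply: contraNN ypL => lastL; apply/hasP; exists (last y p); rewrite ?mem_last.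
  have [yL _] := norP ypL.
  by have [_ <-] := cross_edge_ports last_edge tag_neq lastL yL.
have yp_uniq : uniq (y :: p) by rewrite -sE rot_uniq.
have := path_in_block yp ypL yp_uniq last_tag.
by move=> /allP in_block; apply/allP => z zs; apply: in_block; rewrite -sE mem_rot.
Qed.

Lemma fvs_lifted : fvs dir D L.
Proof.
move=> s cyc; apply/negPn/negP => sL.
have [/allP ports | /allPn [y ys y_port]] := boolP (all (fun x => x == port (tag x)) s).
  have tag_inj : {in s &, injective (fun x => tag x)}.
    by move=> x y xs ys xy; rewrite (eqP (ports x xs)) (eqP (ports y ys)) xy.
  have tag_homo : {in s &, {homo (fun x => tag x) : x y / D x y >-> e0 x y}}.
    move=> x y xs ys Dxy; have [xy | xy] := eqVneq (tag x) (tag y).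
      by move: Dxy; rewrite (tag_inj x y xs ys xy) compose_irrefl.
    by move: Dxy; rewrite compose_cross // => /and3P [].
  have [x xs xF0] := fvs_map_in F0_fvs tag_inj tag_homo cyc.
  by case/hasP: sL; exists x; rewrite // (eqP (ports x xs)); apply/setUP; right; apply: imset_f.
have /allP in_block := cycle_in_block cyc sL ys y_port.
have sameE z : z \in s -> Tagged T (tagged_as y z) = z.
  by move=> zs; apply: Tagged_tagged_as; apply/eqP/in_block.
have as_inj : {in s &, injective (tagged_as y)}.
  by move=> z w zs ws zw; rewrite -(sameE z zs) -(sameE w ws) zw.
have as_homo : {in s &, {homo tagged_as y : z w / D z w >-> e (tag y) z w}}.
  by move=> z w zs ws; rewrite -{1}(sameE z zs) -{1}(sameE w ws) compose_tagged.
have [z zs zM] := fvs_map_in (@M_fvs (tag y)) as_inj as_homo cyc.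
by case/hasP: sL; exists z; rewrite // -(sameE z zs) !inE /= zM.
Qed.

Lemma card_lifted_fvs : (forall i, r i \notin M i) -> #|L| = \sum_i #|M i| + #|F0|.
Proof.
move=> r_notin_M; rewrite cardsU card_imset; last exact: port_inj.
have -> : [set x | tagged x \in M (tag x)] :&: port @: F0 = set0.
  apply/setP => x; rewrite !inE; apply/negP => /andP [xM /imsetP [i _ xE]].
  by move: xM; rewrite xE /= (negbTE (r_notin_M i)).
rewrite cards0 subn0 card_fibers; congr (_ + _); apply: eq_bigr => i _.
by apply: eq_card => a; rewrite !inE.
Qed.

End LiftedFvs.

Lemma fvn_compose_le : (forall i, irreflexive (e i)) -> (forall i, minimal_bad dir (e i) (R i)) ->
  (forall i, R i != set0) -> fvn dir D <= fvn dir e0 + \sum_i fvn dir (e i).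
Proof.
move=> e_irr R_min R_ne.
have split_ex i : exists p : T i * {set T i},
    [/\ p.1 \in R i, min_fvs dir (e i) p.2, R i :\ p.1 \subset p.2 & p.1 \notin p.2].
  have /set0Pn [a aR] := R_ne i.
  by have [M [eM RaM aM]] := minimal_bad_split (R_min i) aR; exists (a, M).
pose r i := (sval (cid (split_ex i))).1; pose M i := (sval (cid (split_ex i))).2.
have [F0 [F0_fvs <-]] := min_fvs_exists dir e0.
have [] : [/\ forall i, min_fvs dir (e i) (M i), forall i, R i :\ r i \subset M i
    & forall i, r i \notin M i].
  by split=> i; case: (svalP (cid (split_ex i))).
move=> M_min R_port r_notin_M.
have DL := fvs_lifted e_irr (fun i => (M_min i).1) R_port F0_fvs.
rewrite (eq_bigr (fun i => #|M i|)) => [|i _]; last by rewrite (M_min i).2.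
by rewrite addnC -(card_lifted_fvs F0 r_notin_M) fvn_le_card.
Qed.

End Composition.

(** * Elimination orderings *)

Lemma ug_sym (T : finType) (e : rel T) : symmetric (ug e).
Proof. by move=> x y; rewrite /ug orbC. Qed.

Lemma ug_irrefl (T : finType) (e : rel T) : irreflexive e -> irreflexive (ug e).
Proof. by move=> e_irr x; rewrite /ug orbb e_irr. Qed.

Lemma ug_sub (T : finType) (e e' : rel T) : subrel e e' -> subrel (ug e) (ug e').
Proof. by move=> ee' x y /orP [/ee' | /ee']; rewrite /ug => ->; rewrite ?orbT. Qed.

Lemma is_clique_subset (T : finType) (G : rel T) (A B : {set T}) :
  A \subset B -> is_clique G B -> is_clique G A.
Proof. by move=> /subsetP AB GB x y /AB xB /AB yB; apply: GB. Qed.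

Lemma is_clique_subrel (T : finType) (G G' : rel T) (A : {set T}) :
  subrel G G' -> is_clique G A -> is_clique G' A.
Proof. by move=> GG' GA x y xA yA xy; apply/GG'/GA. Qed.

Lemma is_clique_setU1 (T : finType) (G : rel T) (w : T) (N : {set T}) :
  symmetric G -> is_clique G N -> {in N, forall y, G y w} -> is_clique G (w |: N).
Proof.
move=> G_sym GN Nw x y; rewrite !inE => /predU1P [-> | xN] /predU1P [-> | yN].
- by rewrite eqxx.
- by rewrite G_sym Nw.
- by move=> _; apply: Nw.
- exact: GN.
Qed.

Lemma is_clique_imset (S U : finType) (G : rel S) (H : rel U) (f : S -> U) (C : {set S}) :
  {homo f : x y / G x y >-> H x y} -> is_clique G C -> is_clique H (f @: C).
Proof.
move=> f_homo GC _ _ /imsetP [x xC ->] /imsetP [y yC ->] fxy; apply/f_homo/GC => //.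
by apply: contraNneq fxy => ->.
Qed.

Lemma is_clique_trim (T : finType) (G : rel T) (C Y : {set T}) (K : nat) :
  C \subset Y -> #|C| <= K -> #|Y| = K.+1 -> is_clique G Y ->
  exists2 Q : {set T}, C \subset Q & [/\ Q \subset Y, is_clique G Q & #|Q| = K].
Proof.
move=> CY C_le Y_card Y_clique.
have [z zY zC] : exists2 z, z \in Y & z \notin C.
  by apply/subsetPn; apply: contraTN C_le => /subset_leq_card; rewrite Y_card -ltnNge.
exists (Y :\ z).
  by apply/subsetP => u uC; rewrite in_setD1 (subsetP CY) // andbT; apply: contraNneq zC => <-.
split; [exact: subD1set | exact: is_clique_subset (subD1set _ _) Y_clique |].
by move: Y_card; rewrite (cardsD1 z) zY add1n => -[].
Qed.

Lemma lex_ltn (a1 a2 b1 b2 B : nat) : b1 < B -> b2 < B ->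
  (a1 * B + b1 < a2 * B + b2) = (a1 < a2) || (a1 == a2) && (b1 < b2).
Proof.
move=> b1B b2B; case: (ltngtP a1 a2) => [a12|a21|->]; rewrite ?ltn_add2l //=.
- have : a1.+1 * B <= a2 * B by rewrite leq_mul2r a12 orbT.
  rewrite mulSn; lia.
- have : a2.+1 * B <= a1 * B by rewrite leq_mul2r a21 orbT.
  rewrite mulSn; lia.
Qed.

Section LexOrder.
Variables (T : finType) (key o : T -> nat).

Definition lex_order (x : T) : nat := key x * (\max_y o y).+1 + o x.

Lemma lex_order_bound x : o x < (\max_y o y).+1.
Proof. by rewrite ltnS; apply: leq_bigmax. Qed.

Lemma lex_order_ltn x y :
  (lex_order x < lex_order y) = (key x < key y) || (key x == key y) && (o x < o y).
Proof. by rewrite lex_ltn // lex_order_bound. Qed.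

Lemma lex_order_inj : (forall x y, key x = key y -> o x = o y -> x = y) -> injective lex_order.
Proof.
move=> key_o_inj x y xy.
have keyE z : lex_order z %/ (\max_y o y).+1 = key z.
  by rewrite divnMDl // divn_small ?addn0 ?lex_order_bound.
have oE z : lex_order z %% (\max_y o y).+1 = o z by rewrite modnMDl modn_small ?lex_order_bound.
by apply: key_o_inj; [rewrite -keyE xy keyE | rewrite -oE xy oE].
Qed.

End LexOrder.

Definition lower (T : finType) (G : rel T) (o : T -> nat) (x : T) : {set T} :=
  [set y | G y x & o y < o x].

(* A perfect elimination ordering read backwards: vertices are eliminated by decreasing o. *)
Definition peo (T : finType) (G : rel T) (o : T -> nat) : Prop :=
  injective o /\ forall x, is_clique G (lower G o x).

Section CliqueFirst.
Variables (T : finType) (G : rel T).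
Hypothesis G_sym : symmetric G.

Definition peo_on (A : {set T}) (o : T -> nat) : Prop :=
  injective o /\ {in A, forall x, is_clique G (A :&: lower G o x)}.

Definition first_in (A Q : {set T}) (o : T -> nat) : Prop :=
  forall x y, x \in Q -> y \in A :\: Q -> o x < o y.

Lemma peo_on_subset (A B : {set T}) (o : T -> nat) : B \subset A -> peo_on A o -> peo_on B o.
Proof.
move=> BA [o_inj o_clique]; split=> // x xB.
by apply: is_clique_subset (o_clique x (subsetP BA x xB)); rewrite setSI.
Qed.

Lemma lower_subset_nbhd (A : {set T}) (o : T -> nat) (w : T) :
  A :&: lower G o w \subset (A :\ w) :&: [set y | G y w].
Proof.
apply/subsetP => y; rewrite !inE => /andP [yA /andP [Gyw lt]].
by rewrite yA Gyw !andbT; apply: contraTneq lt => ->; rewrite ltnn.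
Qed.

Section Step.
Variables (A : {set T}) (o : T -> nat) (w : T).
Hypotheses (o_peo : peo_on A o) (wA : w \in A) (w_max : {in A, forall y, o y <= o w}).

Local Notation A' := (A :\ w).
Local Notation N := (A' :&: [set y | G y w]).

Lemma is_clique_max_nbhd : is_clique G N.
Proof.
apply: is_clique_subset (o_peo.2 w wA); apply/subsetP => y.
rewrite !inE => /andP [/andP [yw yA] Gyw].
rewrite yA Gyw ltn_neqAle w_max // andbT; apply: contra yw => /eqP oyw.
by rewrite (o_peo.1 _ _ oyw).
Qed.

Lemma clique_first_notin (Q : {set T}) (o' : T -> nat) : w \notin Q ->
  peo_on A' o' -> first_in A' Q o' ->
  peo_on A (lex_order (fun z => z == w) o') /\ first_in A Q (lex_order (fun z => z == w) o').
Proof.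
move=> wQ [o'_inj o'_peo] Q_first; split; first split.
- by apply: lex_order_inj => x y _ /o'_inj.
- move=> x xA; have [-> | xw] := eqVneq x w.
    exact: is_clique_subset (lower_subset_nbhd _ _ _) is_clique_max_nbhd.
  have xA' : x \in A' by rewrite !inE xw.
  apply: is_clique_subset (o'_peo x xA'); apply/subsetP => y.
  rewrite !inE lex_order_ltn (negbTE xw) ltn0 /= => /andP [yA /andP [Gyx]].
  by case: (eqVneq y w) => //= yw lt; rewrite yA Gyx lt.
- move=> x y xQ; rewrite !inE lex_order_ltn => /andP [yQ yA].
  have xw : x != w by apply: contraNneq wQ => <-.
  rewrite (negbTE xw); have [// | yw] := eqVneq y w.
  by rewrite /= Q_first // !inE yQ yw.
Qed.

Lemma clique_first_in (Q : {set T}) (o' : T -> nat) : w \in Q -> is_clique G Q ->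
  peo_on A' o' -> first_in A' N o' ->
  let key z := if z == w then 1 else if z \in Q then 0 else 2 in
  peo_on A (lex_order key o') /\ first_in A Q (lex_order key o').
Proof.
move=> wQ Q_clique [o'_inj o'_peo] N_first key; split; first split.
- by apply: lex_order_inj => x y _ /o'_inj.
- move=> x xA; have [-> | xw] := eqVneq x w.
    exact: is_clique_subset (lower_subset_nbhd _ _ _) is_clique_max_nbhd.
  have xA' : x \in A' by rewrite !inE xw.
  have QN y : y \in Q -> y != w -> y \in A -> y \in N.
    by move=> yQ yw yA; rewrite !inE yw yA Q_clique.
  have lowerE y : y \in A :&: lower G (lex_order key o') x ->
      [/\ y \in A, G y x & (key y < key x) || (key y == key x) && (o' y < o' x)].
    by rewrite !inE lex_order_ltn => /andP [-> /andP [-> ->]].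
  case: (boolP (x \in Q)) => [xQ | xQ].
    apply: is_clique_subset (o'_peo x xA'); apply/subsetP => y /lowerE [yA Gyx].
    rewrite /key xQ (negbTE xw) ltn0 /=; case: (eqVneq y w) => [//| yw].
    by case: (y \in Q) => //= lt; rewrite !inE yw yA Gyx.
  case: (boolP (x \in N)) => [xN | xN].
    apply: is_clique_subset (is_clique_setU1 (w := w) G_sym is_clique_max_nbhd _); last first.
      by move=> y; rewrite !inE => /andP [_ ->].
    apply/subsetP => y /lowerE [yA Gyx]; rewrite in_setU1.
    have [// | yw] := eqVneq y w; rewrite /key (negbTE xQ) (negbTE xw) (negbTE yw).
    case: (boolP (y \in Q)) => [yQ _ | yQ /= lt]; first exact: QN.
    by apply: contraTT lt => yN; rewrite -leqNgt ltnW // N_first // in_setD yN !inE yw yA.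
  apply: is_clique_subset (o'_peo x xA'); apply/subsetP => y /lowerE [yA Gyx].
  have [yw | yw] := eqVneq y w.
    by move: xN; rewrite !inE xw xA -yw G_sym Gyx.
  rewrite /key (negbTE xQ) (negbTE xw) (negbTE yw) !inE yw yA Gyx /=.
  case: (boolP (y \in Q)) => [yQ | //] _; apply: N_first; first exact: QN.
  by rewrite in_setD xN !inE xw xA.
- move=> x y xQ; rewrite !inE lex_order_ltn => /andP [yQ yA].
  have yw : y != w by apply: contraNneq yQ => ->.
  by rewrite /key xQ (negbTE yw) (negbTE yQ); case: (x == w).
Qed.

End Step.

(* Remove the o-maximal vertex w of A, which is simplicial; if w is in Q, its
   neighbourhood must come first in the ordering of A minus w. *)
Lemma peo_on_clique_first n (A Q : {set T}) (o : T -> nat) : #|A| = n ->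
  peo_on A o -> Q \subset A -> is_clique G Q -> exists o', peo_on A o' /\ first_in A Q o'.
Proof.
elim: n A Q o => [|n IHn] A Q o cardA o_peo QA Q_clique.
  by exists o; split=> // x y _; move/eqP: cardA; rewrite cards_eq0 => /eqP ->; rewrite !inE andbF.
have [w0 w0A] : exists w, w \in A by apply/card_gt0P; rewrite cardA.
have [w wA' w_max] := @arg_maxnP _ w0 (mem A) o w0A; have wA : w \in A := wA'.
have cardA' : #|A :\ w| = n by move: cardA; rewrite (cardsD1 w) wA => -[].
have A'_peo := peo_on_subset (subD1set A w) o_peo.
case: (boolP (w \in Q)) => wQ.
  have N_sub : (A :\ w) :&: [set y | G y w] \subset A :\ w by apply: subsetIl.
  have [o' [o'_peo N_first]] := IHn _ _ _ cardA' A'_peo N_sub (is_clique_max_nbhd o_peo wA w_max).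
  by eexists; apply: (clique_first_in o_peo wA w_max wQ Q_clique o'_peo N_first).
have QA' : Q \subset A :\ w by rewrite subsetD1 QA.
have [o' [o'_peo Q_first]] := IHn _ _ _ cardA' A'_peo QA' Q_clique.
by eexists; apply: (clique_first_notin o_peo wA w_max wQ o'_peo Q_first).
Qed.

Lemma peo_clique_first (o : T -> nat) (Q : {set T}) : peo G o -> is_clique G Q ->
  exists o', peo G o' /\ forall x y, x \in Q -> y \notin Q -> o' x < o' y.
Proof.
move=> [o_inj o_clique] Q_clique.
have [|o' [[o'_inj o'_clique] Q_first]] :=
  peo_on_clique_first (o := o) (erefl #|[set: T]|) _ (subsetT Q) Q_clique.
  by split=> // x _; rewrite setTI.
exists o'; split; first by split=> // x; have := o'_clique x (in_setT x); rewrite setTI.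
by move=> x y xQ yQ; apply: Q_first => //; rewrite in_setD yQ in_setT.
Qed.

End CliqueFirst.

(** * K-trees *)

Section KtreeOfRank.
Variables (S : finType) (r : S -> nat) (K : nat).
Hypotheses (r_inj : injective r) (r_lt : forall x, r x < #|S|).

Lemma rank_surj m : m < #|S| -> exists x, r x = m.
Proof.
move=> m_lt; have ord_inj : injective (fun x => Ordinal (r_lt x)).
  by move=> x y /(congr1 val) /r_inj.
have [|g _ gK] := inj_card_bij ord_inj; first by rewrite card_ord.
by exists (g (Ordinal m_lt)); have /(congr1 val) := gK (Ordinal m_lt).
Qed.

Lemma card_below m : #|[set x | r x < m]| <= m.
Proof.
rewrite cardE -(size_map r) -[X in _ <= X](size_iota 0 m); apply: uniq_leq_size.
  by rewrite map_inj_uniq ?enum_uniq.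
by move=> n /mapP [x]; rewrite mem_enum inE => xm ->; rewrite mem_iota.
Qed.

Lemma rank_succ_cases x y m : r y = m -> r x < m.+1 -> x = y \/ r x < m.
Proof.
by move=> ry; rewrite ltnS leq_eqVlt => /predU1P [xm|]; [left; apply: r_inj; rewrite ry | right].
Qed.

Definition ktree_prefix (h : rel S) (m : nat) : Prop :=
  [/\ symmetric h, irreflexive h, forall x y, h x y -> r x < m
    & forall x, r x < m -> is_clique h (lower h r x) /\ #|lower h r x| = minn K (r x)].

Lemma ktree_prefix_extend h m : ktree_prefix h m -> m <= #|S| ->
  forall C : {set S}, C \subset [set x | r x < m] -> is_clique h C -> #|C| <= K ->
  exists2 Q : {set S}, C \subset Q &
    [/\ Q \subset [set x | r x < m], is_clique h Q & #|Q| = minn K m].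
Proof.
move=> [h_sym _ _]; elim: m => [|m IHm] h_lower m_le C Cm C_clique C_le.
  exists set0; last by split; rewrite ?sub0set ?cards0 ?minn0 // => x; rewrite inE.
  by apply/subsetP => x /(subsetP Cm); rewrite inE.
have [y ry] := rank_surj m_le.
have below_succ x : r x < m.+1 -> x = y \/ r x < m := rank_succ_cases ry.
have ry_lt : r y < m.+1 by rewrite ry.
have [P_clique P_card] := h_lower y ry_lt.
set P := lower h r y in P_clique P_card; rewrite ry in P_card.
have Pm : P \subset [set x | r x < m] by apply/subsetP => u; rewrite !inE ry => /andP [].
have yP : y \notin P by rewrite inE ltnn andbF.
have Y_clique : is_clique h (y |: P) by apply: is_clique_setU1 => // u; rewrite inE => /andP [].
have Y_card : #|y |: P| = (minn K m).+1 by rewrite cardsU1 yP P_card.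
have Ym : y |: P \subset [set x | r x < m.+1].
  by apply/subsetP => u; rewrite !inE => /predU1P [-> | /andP [_]]; rewrite ry // => /ltnW.
have [mK | Km] := ltnP m K.
  have P_all : P = [set x | r x < m].
    by apply/eqP; rewrite eqEcard Pm P_card (minn_idPr (ltnW mK)) card_below.
  exists (y |: P); last by rewrite Y_card (minn_idPr (ltnW mK)) (minn_idPr mK).
  apply/subsetP => u /(subsetP Cm); rewrite inE => /below_succ [-> | um]; first by rewrite setU11.
  by rewrite P_all !inE um orbT.
have KmE : minn K m.+1 = K by apply/minn_idPl/leqW.
rewrite (minn_idPl Km) in Y_card.
case: (boolP (y \in C)) => yC.
  have CY : C \subset y |: P.
    apply/subsetP => u uC; rewrite !inE; have [// | uy] := eqVneq u y.
    have /below_succ [uy' | um] : r u < m.+1 by move: (subsetP Cm u uC); rewrite inE.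
      by rewrite uy' eqxx in uy.
    by rewrite C_clique // ry um.
  have [Q CQ [QY Q_clique Q_card]] := is_clique_trim CY C_le Y_card Y_clique.
  by exists Q => //; split=> //; [apply: subset_trans QY Ym | rewrite KmE].
have Cm' : C \subset [set x | r x < m].
  apply/subsetP => u uC; have := subsetP Cm u uC; rewrite !inE => /below_succ [uy | //].
  by rewrite -uy uC in yC.
have h_lower' x : r x < m -> is_clique h (lower h r x) /\ #|lower h r x| = minn K (r x).
  by move=> xm; apply: h_lower; rewrite ltnW.
have [Q CQ [Qm Q_clique Q_card]] := IHm h_lower' (ltnW m_le) C Cm' C_clique C_le.
exists Q => //; split=> //; last by rewrite KmE Q_card (minn_idPl Km).
by apply: subset_trans Qm _; apply/subsetP => u; rewrite !inE => /ltnW.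
Qed.

Definition attach (h : rel S) (y : S) (Q : {set S}) : rel S :=
  fun a b => [|| h a b, (a == y) && (b \in Q) | (b == y) && (a \in Q)].

Lemma ktree_prefix_attach h m y (Q : {set S}) : ktree_prefix h m -> r y = m ->
  Q \subset [set x | r x < m] -> is_clique h Q -> #|Q| = minn K m ->
  ktree_prefix (attach h y Q) m.+1.
Proof.
move=> [h_sym h_irr h_dom h_lower] ry Qm Q_clique Q_card.
have yQ : y \notin Q by apply/negP => /(subsetP Qm); rewrite inE ry ltnn.
have h_attach : subrel h (attach h y Q) by move=> a b hab; rewrite /attach hab.
split.
- by move=> a b; rewrite /attach h_sym; congr (_ || _); apply: orbC.
- move=> a; rewrite /attach h_irr orbb /=.
  by apply/negP => /andP [/eqP ay]; rewrite ay (negbTE yQ).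
- move=> a b /or3P [/h_dom /ltnW // | /andP [/eqP -> _] | /andP [_ /(subsetP Qm)]].
    by rewrite ry.
  by rewrite inE => /ltnW.
move=> x; rewrite ltnS leq_eqVlt => /predU1P [xm | xm].
  have -> : x = y by apply: r_inj; rewrite xm ry.
  have -> : lower (attach h y Q) r y = Q.
    apply/setP => u; rewrite !inE /attach eqxx /= ry.
    have -> : h u y = false by apply/negP; rewrite h_sym => /h_dom; rewrite ry ltnn.
    have [-> | _] /= := eqVneq u y; first by rewrite (negbTE yQ).
    by case uQ: (u \in Q) => //=; move: (subsetP Qm u uQ); rewrite inE.
  by split; [apply: is_clique_subrel h_attach Q_clique | rewrite Q_card ry].
have xy : x != y by apply: contraTneq xm => ->; rewrite ry ltnn.
have -> : lower (attach h y Q) r x = lower h r x.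
  apply/setP => u; rewrite !inE /attach (negbTE xy) /= orbF.
  have [-> | _] := eqVneq u y; last by rewrite orbF.
  by rewrite ry ltnNge (ltnW xm) !andbF.
by have [? ?] := h_lower x xm; split=> //; apply: is_clique_subrel h_attach _.
Qed.

(* Add the vertices in rank order, joining each one to a clique of size min(K, rank)
   that contains its earlier G-neighbours. *)
Lemma ktree_prefix_exists (G : rel S) : symmetric G -> irreflexive G ->
  (forall x, is_clique G (lower G r x) /\ #|lower G r x| <= K) ->
  forall m, m <= #|S| -> exists2 h, ktree_prefix h m & {in [set x | r x < m] &, subrel G h}.
Proof.
move=> G_sym G_irr G_lower; elim=> [|m IHm] m_le.
  by exists (fun _ _ => false) => // x; rewrite inE.
have [h h_prefix Gh] := IHm (ltnW m_le).
have [y ry] := rank_surj m_le.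
have [C_clique C_card] := G_lower y.
have Cm : lower G r y \subset [set x | r x < m] by apply/subsetP => u; rewrite !inE ry => /andP [].
have C_clique_h : is_clique h (lower G r y).
  by move=> a b aC bC ab; apply: Gh (C_clique a b aC bC ab); rewrite ?(subsetP Cm).
have [Q CQ [Qm Q_clique Q_card]] := ktree_prefix_extend h_prefix (ltnW m_le) Cm C_clique_h C_card.
exists (attach h y Q); first exact: ktree_prefix_attach.
move=> a b; rewrite !inE => /(rank_succ_cases ry) [-> | am] /(rank_succ_cases ry) [-> | bm] Gab.
- by rewrite G_irr in Gab.
- by rewrite /attach eqxx (subsetP CQ) ?orbT // inE G_sym Gab ry.
- by rewrite /attach eqxx /= (subsetP CQ a) ?orbT // inE Gab ry.
- by rewrite /attach Gh ?inE.
Qed.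

Lemma ktree_of_rank (G : rel S) : symmetric G -> irreflexive G ->
  (forall x, is_clique G (lower G r x) /\ #|lower G r x| <= K) ->
  exists2 h, ktree K h & subrel G h.
Proof.
move=> G_sym G_irr G_lower.
have [h [h_sym h_irr _ h_lower] Gh] := ktree_prefix_exists G_sym G_irr G_lower (leqnn #|S|).
exists h; last by move=> a b; apply: Gh; rewrite inE.
split; first by split.
exists (fun x => Ordinal (r_lt x)); split; first by move=> x y /(congr1 val) /r_inj.
by move=> x; apply: h_lower.
Qed.

End KtreeOfRank.

Section Rank.
Variables (S : finType) (o : S -> nat).

Definition rank (x : S) : nat := #|[set y | o y < o x]|.

Lemma rank_ltn x y : (rank y < rank x) = (o y < o x).
Proof.
apply/idP/idP => [|lt].
  apply: contraTT; rewrite -!leqNgt => le; apply: subset_leq_card.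
  by apply/subsetP => z; rewrite !inE => /leq_trans; apply.
apply/proper_card/properP; split; last by exists y; rewrite !inE ?ltnn.
by apply/subsetP => z; rewrite !inE => /ltn_trans; apply.
Qed.

Lemma rank_inj : injective o -> injective rank.
Proof.
move=> o_inj x y rxy; apply: o_inj; apply/eqP.
by rewrite eqn_leq leqNgt -rank_ltn rxy ltnn leqNgt -rank_ltn rxy ltnn.
Qed.

Lemma rank_lt x : rank x < #|S|.
Proof.
rewrite -cardsT; apply/proper_card/properP; split; first exact: subsetT.
by exists x; rewrite !inE ?ltnn.
Qed.

End Rank.

Lemma ktree_of_peo (S : finType) (G : rel S) (o : S -> nat) (K : nat) :
  symmetric G -> irreflexive G -> peo G o -> (forall x, #|lower G o x| <= K) ->
  exists2 h, ktree K h & subrel G h.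
Proof.
move=> G_sym G_irr [o_inj o_clique] o_width.
apply: (ktree_of_rank (rank_inj o_inj) (@rank_lt _ o) G_sym G_irr) => x.
have -> : lower G (rank o) x = lower G o x by apply/setP => y; rewrite !inE rank_ltn.
by split.
Qed.

Lemma ktree_clique_card (S : finType) (h : rel S) (K : nat) (C : {set S}) :
  ktree K h -> is_clique h C -> #|C| <= K.+1.
Proof.
move=> [_ [phi [phi_inj phi_lower]]] C_clique.
have [-> | [x0 x0C]] := set_0Vmem C; first by rewrite cards0.
have [v vC' v_max] := @arg_maxnP _ x0 (mem C) (fun x => val (phi x)) x0C; have vC : v \in C := vC'.
have Cv : C :\ v \subset [set u | h u v & phi u < phi v].
  apply/subsetP => u; rewrite !inE => /andP [uv uC]; have le_uv : phi u <= phi v := v_max u uC.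
  rewrite C_clique //= ltn_neqAle le_uv andbT.
  by apply: contra uv => /eqP /val_inj /phi_inj ->.
rewrite (cardsD1 v C) vC add1n ltnS; apply: leq_trans (subset_leq_card Cv) _.
by rewrite (phi_lower v).2 geq_minl.
Qed.

Lemma tw_le_clique_card (T : finType) (e : rel T) (K : nat) (C : {set T}) :
  tw_le e K -> is_clique (ug e) C -> #|C| <= K.+1.
Proof.
move=> [S [h [g [h_ktree g_inj g_homo]]]] C_clique.
rewrite -(card_imset _ g_inj).
exact: ktree_clique_card h_ktree (is_clique_imset g_homo C_clique).
Qed.

Lemma tw_le_of_peo (T : finType) (e G : rel T) (o : T -> nat) (K : nat) :
  symmetric G -> irreflexive G -> subrel (ug e) G -> peo G o -> (forall x, #|lower G o x| <= K) ->
  tw_le e K.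
Proof.
move=> G_sym G_irr eG o_peo o_width; have [h h_ktree Gh] := ktree_of_peo G_sym G_irr o_peo o_width.
by exists T, h, id; split=> // x y /eG /Gh.
Qed.

Lemma peo_of_tw_le (T : finType) (e : rel T) (K : nat) : tw_le e K ->
  exists (b : rel T) (p : T -> nat),
    [/\ subrel (ug e) b, symmetric b, peo b p & forall x, #|lower b p x| <= K].
Proof.
move=> [S [h [g [[[_ h_sym] [phi [phi_inj phi_lower]]] g_inj g_homo]]]].
exists (fun x y => h (g x) (g y)), (fun x => val (phi (g x))).
have lower_sub x : g @: lower (fun x y => h (g x) (g y)) (fun x => val (phi (g x))) x
    \subset [set u | h u (g x) & phi u < phi (g x)].
  by apply/subsetP => _ /imsetP [y + ->]; rewrite !inE.
split=> //.
  split=> [x y /val_inj /phi_inj /g_inj // | x].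
  move=> y z yx zx yz; apply: (phi_lower (g x)).1; rewrite ?(subsetP (lower_sub x)) ?imset_f //.
  by apply: contra yz => /eqP /g_inj ->.
move=> x; rewrite -(card_imset _ g_inj); apply: leq_trans (subset_leq_card (lower_sub x)) _.
by rewrite (phi_lower (g x)).2 geq_minl.
Qed.

(** * Treewidth of the composition *)

Lemma compose_sub (k : nat) (e0 b : rel 'I_k) (T : 'I_k -> finType) (e : forall i, rel (T i))
  (R : forall i, {set T i}) : subrel e0 b -> subrel (compose e0 e R) (compose b e R).
Proof. by move=> e0b x y; rewrite /compose; case: ifP => // _ /and3P [/e0b -> -> ->]. Qed.

Section ComposedOrder.
Variables (k : nat) (b : rel 'I_k) (p : 'I_k -> nat) (T : 'I_k -> finType)
  (e : forall i, rel (T i)) (R : forall i, {set T i}) (o : forall i, T i -> nat) (c t t0 : nat).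
Arguments e : clear implicits.
Arguments o : clear implicits.
Hypotheses (b_sym : symmetric b) (b_peo : peo b p) (b_width : forall i, #|lower b p i| <= t0).
Hypotheses (R_clique : forall i, is_clique (ug (e i)) (R i)) (R_card : forall i, #|R i| <= c).
Hypotheses (o_peo : forall i, peo (ug (e i)) (o i))
  (o_width : forall i x, #|lower (ug (e i)) (o i) x| <= t).
Hypothesis R_first : forall i x y, x \in R i -> y \notin R i -> o i x < o i y.

Local Notation G := (ug (compose b e R)).

Lemma ug_compose_tagged i (x y : T i) : G (Tagged T x) (Tagged T y) = ug (e i) x y.
Proof. by rewrite /ug !compose_tagged. Qed.

Lemma ug_compose_cross i j (a : T i) (a' : T j) : i != j ->
  G (Tagged T a) (Tagged T a') = [&& b i j, a \in R i & a' \in R j].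
Proof.
move=> ij; have ji : j != i by rewrite eq_sym.
rewrite /ug !compose_cross //= (b_sym j i).
by case: (b _ _); case: (a \in _); case: (a' \in _).
Qed.

Definition block_key (x : {i : 'I_k & T i}) : nat :=
  if tagged x \in R (tag x) then p (tag x) else (\max_i p i).+1 + tag x.

Lemma port_key_lt i j : p i < (\max_l p l).+1 + j.
Proof. exact: leq_trans (lex_order_bound p i) (leq_addr _ _). Qed.

Definition composed_order : {i : 'I_k & T i} -> nat :=
  lex_order block_key (fun x => o (tag x) (tagged x)).

Lemma composed_order_inj : injective composed_order.
Proof.
apply: lex_order_inj => -[i a] [j a']; rewrite /block_key /=.
have same_block : i = j -> o i a = o j a' -> Tagged T a = Tagged T a'.
  by move=> ij; subst j => /(o_peo i).1 ->.
case: ifP => aR; case: ifP => a'R keq; apply: same_block.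
- exact: b_peo.1.
- by move: (port_key_lt i j); rewrite keq ltnn.
- by move: (port_key_lt j i); rewrite keq ltnn.
- by apply: val_inj; apply: (addnI keq).
Qed.

Definition port_clique i : {set {i : 'I_k & T i}} :=
  [set y | (tag y \in i |: lower b p i) && (tagged y \in R (tag y))].

Lemma is_clique_port_clique i : is_clique G (port_clique i).
Proof.
move=> [j a] [l a']; rewrite [_ \in port_clique i]inE [_ \in port_clique i]inE /=.
move=> /andP [jJ aR] /andP [lJ a'R] ne.
have [jl | jl] := eqVneq j l.
  subst l; rewrite ug_compose_tagged; apply: R_clique => //.
  by apply: contraNneq ne => ->.
rewrite ug_compose_cross //= aR a'R !andbT.
case/setU1P: jJ => [ji | jP]; case/setU1P: lJ => [li | lP].
- by rewrite ji li eqxx in jl.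
- by subst j; move: lP; rewrite inE b_sym => /andP [].
- by subst l; move: jP; rewrite inE => /andP [].
- exact: b_peo.2 i j l jP lP jl.
Qed.

Lemma card_port_clique i : #|port_clique i| <= c * t0.+1.
Proof.
have fiber_le j : #|fiber (port_clique i) j| <= if j \in i |: lower b p i then c else 0.
  case: ifP => jJ.
    apply: leq_trans (R_card j); apply/subset_leq_card/subsetP => a.
    by rewrite inE [_ \in port_clique i]inE /= => /andP [].
  rewrite leqn0 cards_eq0; apply/eqP/setP => a.
  by rewrite inE [_ \in port_clique i]inE /= jJ inE.
rewrite card_fibers (@leq_trans (\sum_j if j \in i |: lower b p i then c else 0)) //.
  by apply: leq_sum => j _; apply: fiber_le.
rewrite -big_mkcond sum_nat_const mulnC leq_mul2l cardsU1.
by rewrite (leq_add (leq_b1 _) (b_width i)) orbT.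
Qed.

Lemma lower_port_subset i (a : T i) : a \in R i ->
  lower G composed_order (Tagged T a) \subset port_clique i :\ Tagged T a.
Proof.
move=> aR; apply/subsetP => y yx; rewrite in_setD1.
have -> /= : y != Tagged T a by apply: contraTneq yx => ->; rewrite inE ltnn andbF.
case: y yx => j a' /[1!inE] /andP [Gyx].
rewrite lex_order_ltn /block_key /= aR [_ \in port_clique i]inE /= => lt.
have [ji | ji] := eqVneq j i.
  subst j; rewrite setU11 /=; case: ifP lt => // a'R.
  by rewrite ltnNge ltnW ?gtn_eqF ?port_key_lt.
move: Gyx; rewrite ug_compose_cross // aR andbT => /andP [bji a'R].
rewrite a'R in lt; have pji : p j < p i.
  by case/orP: lt => [// | /andP [/eqP /b_peo.1 eji]]; rewrite eji eqxx in ji.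
by rewrite a'R andbT in_setU1 inE bji pji orbT.
Qed.

Lemma lower_inner_subset i (a : T i) : a \notin R i ->
  lower G composed_order (Tagged T a) \subset Tagged T @: lower (ug (e i)) (o i) a.
Proof.
move=> aR; apply/subsetP => -[j a'] /[1!inE] /andP [Gyx].
rewrite lex_order_ltn /block_key /= (negbTE aR) => lt.
have [ji | ji] := eqVneq j i; last by move: Gyx; rewrite ug_compose_cross // (negbTE aR) !andbF.
subst j; rewrite ug_compose_tagged in Gyx; apply: imset_f; rewrite inE Gyx /=.
case: ifP lt => a'R lt; first exact: R_first.
by move: lt; rewrite ltnn eqxx.
Qed.

Lemma peo_composed_order : peo G composed_order.
Proof.
split=> [|[i a]]; first exact: composed_order_inj.
have [aR | aR] := boolP (a \in R i).
  have lower_sub := subset_trans (lower_port_subset aR) (subD1set _ _).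
  exact: is_clique_subset lower_sub (is_clique_port_clique (i := i)).
apply: is_clique_subset (lower_inner_subset aR) (is_clique_imset _ ((o_peo i).2 a)).
by move=> x y; rewrite ug_compose_tagged.
Qed.

Lemma card_lower_composed_order x : #|lower G composed_order x| <= maxn t (c * (t0 + 1) - 1).
Proof.
case: x => i a; have [aR | aR] := boolP (a \in R i).
  apply: leq_trans (subset_leq_card (lower_port_subset aR)) (leq_trans _ (leq_maxr _ _)).
  have := card_port_clique i; rewrite (cardsD1 (Tagged T a)) [_ \in port_clique i]inE /= setU11 aR.
  by rewrite addn1 /= => /(leq_sub2r 1); rewrite addKn.
apply: leq_trans (subset_leq_card (lower_inner_subset aR)) (leq_trans _ (leq_maxl _ _)).
exact: leq_trans (leq_imset_card _ _) (o_width a).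
Qed.

End ComposedOrder.

Lemma tw_le_compose (k : nat) (e0 : rel 'I_k) (T : 'I_k -> finType) (e : forall i, rel (T i))
    (R : forall i, {set T i}) (c t t0 : nat) :
  (forall i, irreflexive (e i)) -> (forall i, is_clique (ug (e i)) (R i) /\ #|R i| <= c) ->
  (forall i, chordal (ug (e i))) -> (forall i, tw_le (e i) t) -> tw_le e0 t0 ->
  tw_le (compose e0 e R) (maxn t (c * (t0 + 1) - 1)).
Proof.
move=> e_irr R_clique e_chordal e_tw e0_tw.
have [b [p [e0b b_sym b_peo b_width]]] := peo_of_tw_le e0_tw.
have o_ex i : exists o, peo (ug (e i)) o /\ forall x y, x \in R i -> y \notin R i -> o x < o y.
  have [phi [phi_inj phi_clique]] := e_chordal i.
  apply: (@peo_clique_first _ _ (ug_sym _) (fun x => val (phi x))) (R_clique i).1.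
  by split=> [x y /val_inj /phi_inj | x] //; apply: phi_clique.
pose o i := sval (cid (o_ex i)).
have o_peo i : peo (ug (e i)) (o i) := (svalP (cid (o_ex i))).1.
have R_first i : forall x y, x \in R i -> y \notin R i -> o i x < o i y := (svalP (cid (o_ex i))).2.
have o_width i x : #|lower (ug (e i)) (o i) x| <= t.
  have x_lower : x \notin lower (ug (e i)) (o i) x by rewrite inE ltnn andbF.
  have x_adj : {in lower (ug (e i)) (o i) x, forall y, ug (e i) y x}.
    by move=> y; rewrite inE => /andP [].
  have := tw_le_clique_card (e_tw i) (is_clique_setU1 (ug_sym _) ((o_peo i).2 x) x_adj).
  by rewrite cardsU1 x_lower add1n ltnS.
apply: (@tw_le_of_peo _ _ (ug (compose b e R)) (composed_order p R o)).
- exact: ug_sym.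
- exact: ug_irrefl (compose_irrefl b R e_irr).
- by apply/ug_sub/compose_sub => i j e0ij; apply: e0b; rewrite /ug e0ij.
- exact: peo_composed_order b_sym b_peo (fun i => (R_clique i).1) o_peo R_first.
- exact: card_lower_composed_order b_sym b_peo b_width (fun i => (R_clique i).2) o_width R_first.
Qed.

Theorem mainTheorem10 (dir : bool) (k : nat) (e0 : rel 'I_k)
  (T : 'I_k -> finType) (e : forall i, rel (T i))
  (R0 : {set 'I_k}) (R : forall i, {set T i}) :
  is_graph dir e0 ->
  (forall i, is_graph dir (e i)) ->
  R0 != set0 -> bad dir e0 R0 ->
  (forall i, R i != set0) -> (forall i, bad dir (e i) (R i)) ->
  [/\ #|{: {i : 'I_k & T i}}| = \sum_(i < k) #|T i|
    /\ fvn dir e0 + \sum_(i < k) fvn dir (e i) <= fvn dir (compose e0 e R),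
    (forall i, minimal_bad dir (e i) (R i)) ->
      fvn dir (compose e0 e R) = fvn dir e0 + \sum_(i < k) fvn dir (e i)
      /\ bad dir (compose e0 e R) (compose_set R0 R)
  & forall (c t t0 : nat),
      (forall i, minimal_bad dir (e i) (R i)) ->
      (forall i, is_clique (ug (e i)) (R i) /\ #|R i| <= c) ->
      (forall i, chordal (ug (e i))) ->
      (forall i, tw_le (e i) t) ->
      tw_le e0 t0 ->
      tw_le (compose e0 e R) (maxn t (c * (t0 + 1) - 1))].
Proof.
move=> [e0_irr _] e_graph _ R0_bad R_ne e_bad.
have e_irr i : irreflexive (e i) by case: (e_graph i).
have fvn_ge : fvn dir e0 + \sum_i fvn dir (e i) <= fvn dir (compose e0 e R).
  exact: fvn_compose_ge.
split.
- by split=> //; rewrite card_tagged sumnE big_map big_enum.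
- move=> R_min; have fvnE : fvn dir (compose e0 e R) = fvn dir e0 + \sum_i fvn dir (e i).
    by apply/eqP; rewrite eqn_leq fvn_ge fvn_compose_le.
  by split=> //; apply: bad_compose_set.
- by move=> c t t0 _ R_clique e_chordal e_tw e0_tw; apply: tw_le_compose.
Qed.
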